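(* Let $\sigma$ and $\tau$ be matchings, with $s=|\sigma|$ and $t=|\tau|$. The following are equivalent: (i) $\sigma\leq\tau$; (ii) $1(\sigma+1)1\ \leq\ 1(\tau+1)1(t+2)(t+2)$; (iii) $\sigma(s+1)(s+1)\ \leq\ 1(\tau+1)(t+2)(t+2)1$.
   Context: A matching of order $n$ is a partition of $[2n]$ into blocks (edges) of size two, identified with the word in $[n]^{2n}$ where both vertices of an edge carry the same letter and letters appear in increasing order of left vertices. $|\sigma|$ is the number of edges. For a matching $\alpha$, $\alpha+1$ denotes the word of $\alpha$ with $1$ added to each letter, and words are concatenated: e.g. $1(\sigma+1)1$ is $\sigma$ enclosed by one new edge, $1(\tau+1)1(t+2)(t+2)$ is $\tau$ enclosed by a new edge followed by a further separate edge, $\sigma(s+1)(s+1)$ is $\sigma$ followed by a separate edge, and $1(\tau+1)(t+2)(t+2)1$ is $\tau$ followed by a separate edge, all enclosed by a new edge. $\sigma\le\tau$ means $\sigma$ is a pattern of $\tau$: if $|\sigma|=k$, there are $i_1<\dots<i_{2k}$ with $\{i_p,i_q\}\in\tau$ iff $\{p,q\}\in\sigma$. *)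

From mathcomp Require Import all_boot.
Set Implicit Arguments. Unset Strict Implicit. Unset Printing Implicit Defensive.

(* A matching of order n is encoded as its canonical word in [n]^{2n}
   (a seq nat with letters 1..n): both vertices of an edge carry the same
   letter and letters appear in increasing order of left vertices. *)

Definition msize (w : seq nat) : nat := (size w)./2.

Definition is_matching (w : seq nat) : bool :=
  let n := msize w in
  [&& size w == n.*2,
      all (fun a => (0 < a) && (a <= n)) w,
      all (fun a => count_mem a w == 2) (iota 1 n) &
      all (fun a => index a w < index a.+1 w) (iota 1 n.-1)].

Definition mshift (k : nat) (w : seq nat) : seq nat := map (addn k) w.

Definition medge (w : seq nat) (p q : nat) : bool :=
  [&& p != q, p < size w, q < size w & nth 0 w p == nth 0 w q].

Definition mpattern (sigma tau : seq nat) : Prop :=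
  exists idx : seq nat,
    [/\ size idx = size sigma,
        sorted ltn idx,
        all (fun i => i < size tau) idx &
        forall p q, p < size sigma -> q < size sigma ->
          medge tau (nth 0 idx p) (nth 0 idx q) = medge sigma p q].

From mathcomp Require Import all_boot.

(* An occurrence of sigma as a pattern of tau is the same thing as a
   subsequence of tau obtained from sigma by a renaming of its letters that is
   injective on them.  Renamings make the forward implications immediate:
   send the new outer edge of 1(sigma+1)1, resp. the new trailing edge of
   sigma(s+1)(s+1), to the corresponding new edge of the target and forget the
   surplus letters of the target.  Conversely, the enclosing edge of
   1(sigma+1)1 can only go to the outer edge 1..1 of 1(tau+1)1(t+2)(t+2), to
   an edge of tau+1, or to the adjacent pair (t+2)(t+2) (and then sigma is
   empty), so the image of sigma+1 always lies in tau+1.  In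
   1(tau+1)(t+2)(t+2)1 the image of sigma is followed by two letters of the
   target, hence lies in 1(tau+1)(t+2); there the letters 1 and t+2 occur only
   once, while every letter of the image occurs twice, so the image lies in
   tau+1. *)

Set Implicit Arguments.
Unset Strict Implicit.
Unset Printing Implicit Defensive.

Section Subsequences.

Variable T : eqType.
Implicit Types (a b c x y : T) (s t u w m : seq T).

Lemma subseq_nthP x0 w t :
  reflect (exists idx, [/\ sorted ltn idx, all (fun i => i < size t) idx
                         & w = map (nth x0 t) idx])
          (subseq w t).
Proof.
apply: (iffP idP) => [/subseqP[msk _ ->] | [idx [idx_lt idx_t ->]]].
  exists (mask msk (iota 0 (size t))); split.
  - exact: (subseq_sorted ltn_trans (mask_subseq _ _) (iota_ltn_sorted 0 _)).
  - by apply/allP=> i /mem_mask; rewrite mem_iota.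
  - by rewrite map_mask (map_nth_iota0 _ (leqnn _)) take_size.
have -> : idx = mask [seq i \in idx | i <- iota 0 (size t)] (iota 0 (size t)).
  rewrite -filter_mask; apply: (irr_sorted_eq ltn_trans ltnn) => //.
    exact/sorted_filter/iota_ltn_sorted/ltn_trans.
  move=> i; rewrite mem_filter mem_iota /=.
  by case: (boolP (i \in idx)) => //= /(allP idx_t).
by rewrite map_mask (map_nth_iota0 _ (leqnn _)) take_size mask_subseq.
Qed.

Lemma subseq_cons_catl x s u t :
  x \notin u -> subseq (x :: s) (u ++ t) = subseq (x :: s) t.
Proof.
elim: u => // y u IHu; rewrite inE negb_or => /andP[/negbTE xy /IHu].
by rewrite cat_cons /= xy.
Qed.

Lemma subseq_rcons_catr x s u t :
  x \notin u -> subseq (rcons s x) (t ++ u) = subseq (rcons s x) t.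
Proof.
move=> xu; rewrite -subseq_rev -[RHS]subseq_rev rev_rcons rev_cat.
by rewrite subseq_cons_catl ?mem_rev.
Qed.

Lemma subseq_rcons2 s t x y : subseq (rcons s x) (rcons t y) -> subseq s t.
Proof.
rewrite -subseq_rev !rev_rcons /=.
by case: ifP => _ => [|/cons_subseq]; rewrite subseq_rev.
Qed.

Lemma subseq_filter_repeated w t :
  subseq w t -> {in w, forall y, 1 < count_mem y w} ->
  subseq w [seq y <- t | 1 < count_mem y t].
Proof.
move=> wt w_twice; rewrite subseq_filter wt andbT; apply/allP => y yw.
exact: leq_trans (w_twice y yw) (leq_count_subseq _ wt).
Qed.

Lemma subseq_enclosed a c x w m : x \notin m -> c != x ->
  subseq (a :: w ++ [:: a]) (c :: m ++ [:: c; x; x]) -> subseq w m.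
Proof.
move=> xm cx /=; have [-> | ac] := eqVneq a c.
  rewrite cats1 -cat_rcons subseq_rcons_catr ?inE ?negb_or ?cx //.
  by rewrite -!cats1 subseq_cat2r.
have [am | am] := boolP (a \in m).
  have a_tail : a \notin [:: c; x; x].
    by rewrite !inE (negbTE ac) orbb; apply: contraNneq xm => <-.
  rewrite cats1 -rcons_cons subseq_rcons_catr // rcons_cons.
  by move/cons_subseq; apply: subseq_trans; apply: subseq_rcons.
rewrite -[[:: c; x; x]]/([:: c] ++ [:: x; x]) catA subseq_cons_catl; last first.
  by rewrite mem_cat inE (negbTE am) (negbTE ac).
move/size_subseq; rewrite /= size_cat addn1.
by case: w => [_ | //]; apply: sub0seq.
Qed.

Lemma subseq_cat_pair b c x w m : c \notin m -> x \notin m -> c != x ->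
  {in w, forall y, 1 < count_mem y w} ->
  subseq (w ++ [:: b; b]) (c :: m ++ [:: x; x; c]) -> subseq w m.
Proof.
move=> cm xm cx w_twice.
have -> : w ++ [:: b; b] = rcons (rcons w b) b by rewrite -!cats1 -catA.
have -> : c :: m ++ [:: x; x; c] = rcons (rcons (c :: m ++ [:: x]) x) c.
  by rewrite -!cats1 /= -!catA.
move=> /subseq_rcons2/subseq_rcons2/subseq_filter_repeated/(_ w_twice) sub.
apply: subseq_trans sub _; set t := c :: m ++ [:: x].
have tc : count_mem c t = 1.
  by rewrite /= eqxx count_cat (count_memPn cm) /= eq_sym (negbTE cx).
have tx : count_mem x t = 1.
  by rewrite /= (negbTE cx) count_cat (count_memPn xm) /= eqxx.
rewrite -[X in filter _ X]/([:: c] ++ m ++ [:: x]) !filter_cat; clearbody t.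
by rewrite /= tc tx cats0 filter_subseq.
Qed.

End Subsequences.

Lemma medge_nth t idx p q :
  uniq idx -> all (fun i => i < size t) idx -> p < size idx -> q < size idx ->
  medge t (nth 0 idx p) (nth 0 idx q)
    = (p != q) && (nth 0 (map (nth 0 t) idx) p == nth 0 (map (nth 0 t) idx) q).
Proof.
move=> idx_uniq /allP idx_t hp hq.
by rewrite /medge nth_uniq // !idx_t ?mem_nth // !(nth_map 0).
Qed.

Lemma relabelP (w s : seq nat) :
  (exists2 f : nat -> nat, {in s &, injective f} & w = map f s) <->
  size w = size s /\ forall p q, p < size s -> q < size s ->
    (nth 0 w p == nth 0 w q) = (nth 0 s p == nth 0 s q).
Proof.
split=> [[f fI ->] | [sz eq_w]].
  split=> [|p q hp hq]; first by rewrite size_map.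
  by rewrite !(nth_map 0) // (inj_in_eq fI) ?mem_nth.
exists (fun x => nth 0 w (index x s)).
  by move=> x y xs ys /eqP; rewrite eq_w ?index_mem // !nth_index // => /eqP.
apply: (@eq_from_nth _ 0) => [|i hi]; first by rewrite size_map.
have si : nth 0 s i \in s by rewrite mem_nth // -sz.
rewrite (nth_map 0) -?sz //; apply/eqP.
by rewrite eq_w ?index_mem -?sz // nth_index.
Qed.

Lemma mpatternP sigma tau :
  mpattern sigma tau <->
  exists2 f : nat -> nat, {in sigma &, injective f} & subseq (map f sigma) tau.
Proof.
have edgesE idx : sorted ltn idx -> all (fun i => i < size tau) idx ->
    size idx = size sigma ->
  (forall p q, p < size sigma -> q < size sigma ->
     medge tau (nth 0 idx p) (nth 0 idx q) = medge sigma p q) <->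
  (forall p q, p < size sigma -> q < size sigma ->
     (nth 0 (map (nth 0 tau) idx) p == nth 0 (map (nth 0 tau) idx) q)
       = (nth 0 sigma p == nth 0 sigma q)).
  move=> idx_lt idx_tau sz; have idx_uniq := sorted_uniq ltn_trans ltnn idx_lt.
  split=> E p q hp hq; last by rewrite medge_nth ?sz // /medge hp hq E.
  have [-> | pq] := eqVneq p q; first by rewrite !eqxx.
  by move: (E p q hp hq); rewrite medge_nth ?sz // /medge pq hp hq.
split=> [[idx [sz idx_lt idx_tau /(edgesE _ idx_lt idx_tau sz) E]] | [f fI]].
  have [f fI fE] : exists2 f : nat -> nat,
      {in sigma &, injective f} & map (nth 0 tau) idx = map f sigma.
    by apply/relabelP; rewrite size_map.
  by exists f => //; apply/(subseq_nthP 0); exists idx; rewrite fE.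
case/(subseq_nthP 0) => idx [idx_lt idx_tau fE].
have [sz E] := (relabelP _ _).1 (ex_intro2 _ _ f fI (esym fE)).
have idx_sz : size idx = size sigma by rewrite -(size_map (nth 0 tau)) sz.
by exists idx; split=> //; apply/(edgesE _ idx_lt idx_tau idx_sz).
Qed.

Lemma subseq_mpattern s t : subseq s t -> mpattern s t.
Proof. by move=> st; apply/mpatternP; exists id; rewrite ?map_id. Qed.

Lemma mpattern_trans r s t : mpattern r s -> mpattern s t -> mpattern r t.
Proof.
move=> /mpatternP[f fI rs] /mpatternP[g gI st]; apply/mpatternP.
have f_s x : x \in r -> f x \in s.
  by move=> xr; exact: (mem_subseq rs (map_f f xr)).
exists (g \o f); first by move=> x y xr yr /gI /fI; apply; rewrite ?f_s.
by rewrite map_comp; apply: subseq_trans (map_subseq g rs) st.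
Qed.

Lemma mpattern_map f s : {in s &, injective f} -> mpattern s (map f s).
Proof. by move=> fI; apply/mpatternP; exists f. Qed.

Lemma mpattern_mapK f g s : {in s, cancel f g} -> mpattern (map f s) s.
Proof.
move=> fK; apply/mpatternP; exists g.
  by move=> _ _ /mapP[x xs ->] /mapP[y ys ->]; rewrite !fK // => ->.
by rewrite -map_comp map_id_in.
Qed.

Lemma mpattern_shiftr k s : mpattern s (mshift k s).
Proof. by apply: mpattern_map => x y _ _ /addnI. Qed.

Lemma mpattern_shiftl k s : mpattern (mshift k s) s.
Proof. by apply: (mpattern_mapK (g := subn^~ k)) => x _; rewrite addKn. Qed.

Lemma mpattern_shift k s t :
  mpattern (mshift k s) (mshift k t) <-> mpattern s t.
Proof.
split=> st.
  apply: mpattern_trans (mpattern_shiftr k s) _.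
  exact: mpattern_trans st (mpattern_shiftl k t).
apply: mpattern_trans (mpattern_shiftl k s) _.
exact: mpattern_trans st (mpattern_shiftr k t).
Qed.

Section FreshPair.

Variables (a b : nat) (s t : seq nat).
Hypotheses (a_s : a \notin s) (b_t : b \notin t).

Lemma mpattern_fresh : mpattern s t ->
  exists2 g : nat -> nat,
    {in a :: s &, injective g} & g a = b /\ subseq (map g s) t.
Proof.
case/mpatternP => f fI st; set g := fun x => if x == a then b else f x.
have gf : {in s, g =1 f}.
  by move=> x xs; rewrite /g ifN_eq //; apply: contraNneq a_s => <-.
have f_t x : x \in s -> f x != b.
  move=> xs; apply: contraNneq b_t => <-.
  exact: (mem_subseq st (map_f f xs)).
exists g; last by split; [rewrite /g eqxx | have /eq_in_map-> := gf].
move=> x y; rewrite !inE => /predU1P[-> | xs] /predU1P[-> | ys] //.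
- by rewrite (gf y ys) /g eqxx => /esym/eqP; rewrite (negbTE (f_t y ys)).
- by rewrite (gf x xs) /g eqxx => /eqP; rewrite (negbTE (f_t x xs)).
- by rewrite (gf x xs) (gf y ys); apply: fI.
Qed.

Lemma mpattern_enclose :
  mpattern s t -> mpattern (a :: s ++ [:: a]) (b :: t ++ [:: b]).
Proof.
case/mpattern_fresh => g gI [ga st]; apply/mpatternP; exists g.
  apply: sub_in2 gI => x; rewrite !(inE, mem_cat).
  by case/or3P=> ->; rewrite ?orbT.
by rewrite /= map_cat /= ga eqxx subseq_cat2r.
Qed.

Lemma mpattern_cat_pair :
  mpattern s t -> mpattern (s ++ [:: a; a]) (t ++ [:: b; b]).
Proof.
case/mpattern_fresh => g gI [ga st]; apply/mpatternP; exists g.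
  apply: sub_in2 gI => x; rewrite !(inE, mem_cat).
  by case/or3P=> ->; rewrite ?orbT.
by rewrite map_cat /= ga subseq_cat2r.
Qed.

End FreshPair.

Lemma mpattern_enclosed_inner (a c x : nat) s m : x \notin m -> c != x ->
  mpattern (a :: s ++ [:: a]) (c :: m ++ [:: c; x; x]) -> mpattern s m.
Proof.
move=> xm cx /mpatternP[f fI sub].
apply: mpattern_trans (mpattern_map (f := f) _) (subseq_mpattern _).
  by apply: sub_in2 fI => y ys; rewrite inE mem_cat ys orbT.
by move: sub; rewrite map_cons map_cat; apply: subseq_enclosed.
Qed.

Lemma mpattern_cat_pair_prefix (a c x : nat) s m :
  c \notin m -> x \notin m -> c != x -> {in s, forall y, 1 < count_mem y s} ->
  mpattern (s ++ [:: a; a]) (c :: m ++ [:: x; x; c]) -> mpattern s m.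
Proof.
move=> cm xm cx s_twice /mpatternP[f fI sub].
apply: mpattern_trans (mpattern_map (f := f) _) (subseq_mpattern _).
  by apply: sub_in2 fI => y ys; rewrite mem_cat ys.
move: sub; rewrite map_cat; apply: subseq_cat_pair => // _ /mapP[y ys ->].
rewrite count_map; apply: leq_trans (s_twice y ys) (sub_count _ _).
by move=> z /eqP-> /=.
Qed.

Lemma matching_letter_bound w x : is_matching w -> x \in w -> 0 < x <= msize w.
Proof. by case/and4P => _ /allP w_bound _ _; apply: w_bound. Qed.

Lemma matching_count w x : is_matching w -> x \in w -> count_mem x w = 2.
Proof.
case/and4P => _ /allP w_bound /allP w_count _ xw; apply/eqP/w_count.
by have /andP[x_gt0 x_le] := w_bound x xw; rewrite mem_iota x_gt0 add1n ltnS.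
Qed.

Lemma matching_shift_bound w y :
  is_matching w -> y \in mshift 1 w -> 1 < y <= (msize w).+1.
Proof.
move=> w_m /mapP[z /(matching_letter_bound w_m) z_bound ->].
by rewrite add1n !ltnS.
Qed.

Theorem lemma1 (sigma tau : seq nat) :
  is_matching sigma -> is_matching tau ->
  let s := msize sigma in
  let t := msize tau in
  [/\ (mpattern sigma tau <->
        mpattern ([:: 1] ++ mshift 1 sigma ++ [:: 1])
                 ([:: 1] ++ mshift 1 tau ++ [:: 1; t + 2; t + 2])),
      (mpattern sigma tau <->
        mpattern (sigma ++ [:: s + 1; s + 1])
                 ([:: 1] ++ mshift 1 tau ++ [:: t + 2; t + 2; 1])) &
      (mpattern ([:: 1] ++ mshift 1 sigma ++ [:: 1])
                 ([:: 1] ++ mshift 1 tau ++ [:: 1; t + 2; t + 2]) <->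
        mpattern (sigma ++ [:: s + 1; s + 1])
                 ([:: 1] ++ mshift 1 tau ++ [:: t + 2; t + 2; 1]))].
Proof.
move=> sigma_m tau_m s t; set M := mshift 1 tau.
have one_M : 1 \notin M by apply/negP => /(matching_shift_bound tau_m).
have top_M : t + 2 \notin M.
  by apply/negP => /(matching_shift_bound tau_m); rewrite addn2 ltnn andbF.
have one_top : 1 != t + 2 by rewrite addn2.
have one_sigma1 : 1 \notin mshift 1 sigma.
  by apply/negP => /(matching_shift_bound sigma_m).
have top_sigma : s + 1 \notin sigma.
  by apply/negP => /(matching_letter_bound sigma_m); rewrite addn1 ltnn andbF.
have sigma_twice : {in sigma, forall y, 1 < count_mem y sigma}.
  by move=> y /(matching_count sigma_m) ->.
have e1 : mpattern sigma tau <->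
    mpattern ([:: 1] ++ mshift 1 sigma ++ [:: 1])
             ([:: 1] ++ M ++ [:: 1; t + 2; t + 2]).
  split=> [/(mpattern_shift 1) st | /(mpattern_enclosed_inner top_M one_top)].
    apply: mpattern_trans (mpattern_enclose one_sigma1 one_M st) _.
    apply: subseq_mpattern.
    by rewrite /= subseq_cat2l (prefix_subseq [:: 1]).
  by move/(mpattern_shift 1).
have e2 : mpattern sigma tau <->
    mpattern (sigma ++ [:: s + 1; s + 1]) ([:: 1] ++ M ++ [:: t + 2; t + 2; 1]).
  split=> [st | /(mpattern_cat_pair_prefix one_M top_M one_top sigma_twice) st].
    have st' := mpattern_trans st (mpattern_shiftr 1 tau).
    apply: mpattern_trans (mpattern_cat_pair top_sigma top_M st') _.
    apply: subseq_mpattern.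
    rewrite -[[:: t + 2; t + 2; 1]]/([:: t + 2; t + 2] ++ [:: 1]) (catA M).
    exact: subseq_trans (prefix_subseq _ [:: 1]) (subseq_cons _ 1).
  exact: mpattern_trans st (mpattern_shiftl 1 tau).
by split=> //; apply: iff_trans (iff_sym e1) e2.
Qed.
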